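(* Let $\mathbf q=(q_1,\dots,q_R)$ be route flows, $\mathbf t=(t_1,\dots,t_R)$ route travel times, and let $\mu$ be an assignment plan inducing an offer profile $T^{CAV}$ subject to $(\mathbf q,\mathbf t)$. Then there exist measurable weights $\alpha^{r_1r_2}:I\to[0,1]$, $(r_1,r_2)\in\{1,\dots,R\}^2$, with $\sum_{r_1,r_2}\alpha^{r_1r_2}(i)=1$, and measurable vectors $\mu^R(i,r_1,r_2,\cdot)\in\Delta^{R-1}$, each having at most two positive coordinates, such that for a.e. $i$: $\sum_rt_r\mu^R(i,r_1,r_2,r)=T^{CAV}_i$ whenever $\alpha^{r_1r_2}(i)>0$, and $\sum_{r_1,r_2}\alpha^{r_1r_2}(i)\mu^R(i,r_1,r_2,r)=\mu(i,r)$ for every $r$. Equivalently, on the augmented driver space $\tilde I=I\times\{1,\dots,R\}^2$ with measure $\tilde{di}(A)=\int_I\sum_{r_1,r_2}\alpha^{r_1r_2}(i)\mathbf 1_{(i,r_1,r_2)\in A}\,di$ (which splits each driver into finitely many parts), $\mu^R$ is an assignment plan whose induced distribution on $\Delta^{R-1}$ is supported on vectors with at most two nonzero coordinates, which induces the same travel time distribution as $\mu$, and from which $\mu$ is recovered by recombining the parts of each driver. (Such a plan is in general not unique.)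
   Context: Drivers form a measure space $(I,di)$ of total mass $q=\sum_rq_r$. $\Delta^{R-1}=\{(x_1,\dots,x_R):x_r\ge0,\sum_rx_r=1\}$. An offer profile subject to $(\mathbf q,\mathbf t)$ is a measurable $T^{CAV}:I\to[\min_rt_r,\max_rt_r]$ with $\frac1{|I|}\int_IT^{CAV}_i\,di=\frac1q\sum_rq_rt_r$. An assignment plan inducing $T^{CAV}$ is a measurable $\mu:I\times\{1,\dots,R\}\to[0,1]$ with $\int_I\mu(i,r)\,di=q_r$ for every $r$, $\sum_r\mu(i,r)=1$ and $\sum_rt_r\mu(i,r)=T^{CAV}_i$ for a.e. $i$. The travel time distribution induced by a plan is the push-forward of the driver measure under $i\mapsto\sum_rt_r\mu(i,r)$. *)

From HB Require Import structures.
From mathcomp Require Import all_boot all_order all_algebra.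
From mathcomp Require Import all_classical all_reals all_analysis.
Set Implicit Arguments. Unset Strict Implicit. Unset Printing Implicit Defensive.
Import Order.TTheory GRing.Theory Num.Theory.
Local Open Scope classical_set_scope.
Local Open Scope ring_scope.

Definition total_flow (R : realType) (nR : nat) (q : 'I_nR -> R) : R :=
  \sum_(r < nR) q r.

(* Offer profile subject to (q, t): measurable T : I -> [min_r t_r, max_r t_r]
   with (1/|I|) int_I T = (1/q) sum_r q_r t_r. *)
Definition offer_profile (d : measure_display) (I : measurableType d)
  (R : realType) (P : {measure set I -> \bar R}) (nR : nat)
  (q t : 'I_nR -> R) (T : I -> R) : Prop :=
  [/\ measurable_fun setT T,
      (forall i, (exists r, t r <= T i) /\ (exists r, T i <= t r)) &
      (fine (P setT))^-1 * Rintegral P setT T =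
      (total_flow q)^-1 * \sum_(r < nR) q r * t r].

Definition assignment_plan (d : measure_display) (I : measurableType d)
  (R : realType) (P : {measure set I -> \bar R}) (nR : nat)
  (q t : 'I_nR -> R) (T : I -> R) (mu : I -> 'I_nR -> R) : Prop :=
  [/\ (forall r, measurable_fun setT (fun i => mu i r)),
      (forall i r, 0 <= mu i r <= 1),
      (forall r, (\int[P]_(i in setT) (mu i r)%:E = (q r)%:E)%E),
      {ae P, forall i, \sum_(r < nR) mu i r = 1} &
      {ae P, forall i, \sum_(r < nR) t r * mu i r = T i}].

Definition in_simplex (R : realType) (nR : nat) (x : 'I_nR -> R) : Prop :=
  (forall r, 0 <= x r) /\ \sum_(r < nR) x r = 1.

Definition at_most_two_positive (R : realType) (nR : nat) (x : 'I_nR -> R) : Prop :=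
  (#|[pred r : 'I_nR | (0 < x r)%R]| <= 2)%N.

From HB Require Import structures.
From mathcomp Require Import all_boot all_order all_algebra.
From mathcomp Require Import all_classical all_reals all_analysis.
From mathcomp Require Import measurable_realfun ring.
Set Implicit Arguments. Unset Strict Implicit. Unset Printing Implicit Defensive.
Import Order.TTheory GRing.Theory Num.Theory.
Local Open Scope classical_set_scope.
Local Open Scope ring_scope.

(* Fix a driver, with route split m and mean travel time T.  Pair every route
   r1 faster than T with every route r2 slower than T: the pair gets weight
   m r1 m r2 (t r2 - t r1) / D, where D = sum_r m r (t r - T)^+, and the split
   of r1, r2 in the proportions (t r2 - T) : (T - t r1), whose mean is exactly
   T; a route with t r = T forms the pair (r, r) with weight m r.  Summing over
   partners, a fast route r gets back m r * D / D and a slow route r gets back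
   m r * D' / D, where D' = sum_r m r (T - t r)^+.  Because the mean of m is T,
   D' = D, so the parts recombine to m. *)

Lemma sum_indicator_mull (R : pzSemiRingType) n (a : 'I_n) (F : 'I_n -> R) :
  \sum_(r < n) (r == a)%:R * F r = F a.
Proof.
under eq_bigr do rewrite mulr_natl mulrb.
by rewrite -big_mkcond big_pred1_eq.
Qed.

Lemma sum_indicator (R : pzSemiRingType) n (a : 'I_n) :
  \sum_(r < n) (r == a)%:R = 1 :> R.
Proof. by move: (sum_indicator_mull a (fun=> 1 : R)); under eq_bigr do rewrite mulr1. Qed.

Lemma ler_term_sum (R : numDomainType) (I : finType) (F : I -> R) a :
  (forall i, 0 <= F i) -> F a <= \sum_i F i.
Proof. by move=> F_ge0; rewrite (bigD1 a) //= lerDl sumr_ge0. Qed.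

Section PairSplitting.
Variables (R : realFieldType) (n : nat) (t : 'I_n -> R).
Implicit Types (T : R) (m : 'I_n -> R) (r : 'I_n).

Definition straddles T r1 r2 := (t r1 < T) && (T < t r2).

Definition dev_above T m := \sum_r (if T < t r then m r * (t r - T) else 0).
Definition dev_below T m := \sum_r (if t r < T then m r * (T - t r) else 0).

(* When dev_above T m = 0, straddling pairs get weight 0 (x / 0 = 0); for a
   balanced m the mass then sits on routes with t r = T. *)
Definition pair_weight T m r1 r2 :=
  if straddles T r1 r2 then m r1 * m r2 * (t r2 - t r1) / dev_above T m
  else if (r1 == r2) && (t r1 == T) then m r1 else 0.

Definition pair_mix T r1 r2 r :=
  if straddles T r1 r2 then
    (r == r1)%:R * ((t r2 - T) / (t r2 - t r1))
    + (r == r2)%:R * ((T - t r1) / (t r2 - t r1))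
  else (r == r1)%:R.

Lemma straddles_gap_neq0 T r1 r2 : straddles T r1 r2 -> t r2 - t r1 != 0.
Proof. by case/andP=> lt1 lt2; rewrite subr_eq0 gt_eqF // (lt_trans lt1 lt2). Qed.

Lemma pair_mix_ge0 T r1 r2 r : 0 <= pair_mix T r1 r2 r.
Proof.
rewrite /pair_mix; case: ifP => [/andP[lt1 lt2]|_]; last exact: ler0n.
have gap_ge0 : 0 <= t r2 - t r1 by rewrite subr_ge0 ltW // (lt_trans lt1 lt2).
by rewrite addr_ge0 // mulr_ge0 // divr_ge0 // subr_ge0 ltW.
Qed.

Lemma pair_mix_sum1 T r1 r2 : \sum_r pair_mix T r1 r2 r = 1.
Proof.
rewrite /pair_mix; case: (boolP (straddles T r1 r2)) => strad.
  by rewrite big_split /= !sum_indicator_mull; field; exact: straddles_gap_neq0 strad.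
exact: sum_indicator.
Qed.

Lemma pair_mix_eq0 T r1 r2 r : r != r1 -> r != r2 -> pair_mix T r1 r2 r = 0.
Proof. by rewrite /pair_mix => /negbTE-> /negbTE->; rewrite !mul0r addr0; case: ifP. Qed.

Lemma pair_weight_ge0 T m r1 r2 :
  (forall r, 0 <= m r) -> 0 <= pair_weight T m r1 r2.
Proof.
move=> m_ge0; rewrite /pair_weight; case: ifP => [/andP[lt1 lt2]|_].
  rewrite divr_ge0 ?mulr_ge0 // ?subr_ge0 ?(ltW (lt_trans lt1 lt2)) //.
  by apply: sumr_ge0 => r _; case: ifP => // lt; rewrite mulr_ge0 // subr_ge0 ltW.
by case: ifP.
Qed.

Lemma pair_weight_gt0_mean T m r1 r2 : 0 < pair_weight T m r1 r2 ->
  \sum_r t r * pair_mix T r1 r2 r = T.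
Proof.
rewrite /pair_weight /pair_mix; case: (boolP (straddles T r1 r2)) => [strad _|_].
  under eq_bigr do rewrite mulrDr !(mulrCA (t _)).
  by rewrite big_split /= !sum_indicator_mull; field; exact: straddles_gap_neq0 strad.
case: ifP => [/andP[_ /eqP <-] _|_]; last by rewrite ltxx.
by under eq_bigr do rewrite mulrC; rewrite sum_indicator_mull.
Qed.

Lemma pair_weight_mix_expand T m r1 r2 r :
  pair_weight T m r1 r2 * pair_mix T r1 r2 r =
    (r1 == r)%:R * (if t r1 < T then m r1 else 0)
      * (if T < t r2 then m r2 * (t r2 - T) else 0) / dev_above T m
  + (if t r1 < T then m r1 * (T - t r1) else 0)
      * ((r2 == r)%:R * (if T < t r2 then m r2 else 0)) / dev_above T m
  + (r2 == r1)%:R * ((r1 == r)%:R * (if t r1 == T then m r1 else 0)).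
Proof.
rewrite /pair_weight /pair_mix /straddles; move: (dev_above T m)^-1 => Dinv.
case: (ltgtP (t r1) T) => [lt1|gt1|->]; case: (ltgtP T (t r2)) => [lt2|gt2|eq2] /=;
  rewrite ?(mulr0, mul0r, add0r, addr0, andbF, andbT, eqxx) //.
- rewrite (eq_sym r r1) (eq_sym r r2); field.
  by rewrite subr_eq0 gt_eqF // (lt_trans lt1 lt2).
all: rewrite (eq_sym r r1) (eq_sym r2 r1).
all: by case: (r1 == r2); rewrite ?mul1r ?mul0r // mulrC.
Qed.

Section Balanced.
Variables (T : R) (m : 'I_n -> R).
Hypotheses (m_ge0 : forall r, 0 <= m r) (m_sum1 : \sum_r m r = 1)
  (m_mean : \sum_r t r * m r = T).

Lemma dev_below_eq_above : dev_below T m = dev_above T m.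
Proof.
apply/eqP; rewrite -subr_eq0 /dev_above /dev_below -sumrB; apply/eqP.
transitivity (\sum_r (T - t r) * m r).
  apply: eq_bigr => r _.
  by case: ltgtP => [lt|gt|->]; rewrite ?subrr ?mul0r ?subr0 ?sub0r //; ring.
by under eq_bigr do rewrite mulrBl; rewrite sumrB -mulr_sumr m_mean m_sum1 mulr1 subrr.
Qed.

Lemma dev_above_eq0 r : dev_above T m = 0 -> t r != T -> m r = 0.
Proof.
move=> above0; have below0 : dev_below T m = 0 by rewrite dev_below_eq_above.
have term_ge0 (a b : R) r' : 0 <= (if a < b then m r' * (b - a) else 0).
  by case: ifP => // lt; rewrite mulr_ge0 // subr_ge0 ltW.
case: ltgtP => // [lt|gt] _.
- move: (psumr_eq0P (fun r' _ => term_ge0 _ _ r') below0 (i := r) isT).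
  by rewrite lt => /eqP; rewrite mulf_eq0 subr_eq0 (gt_eqF lt) orbF => /eqP.
- move: (psumr_eq0P (fun r' _ => term_ge0 _ _ r') above0 (i := r) isT).
  by rewrite gt => /eqP; rewrite mulf_eq0 subr_eq0 (gt_eqF gt) orbF => /eqP.
Qed.

Lemma pair_weight_mix_recombine r :
  \sum_r1 \sum_r2 pair_weight T m r1 r2 * pair_mix T r1 r2 r = m r.
Proof.
under eq_bigr do under eq_bigr do rewrite pair_weight_mix_expand.
under eq_bigr do rewrite !big_split /= -!mulr_suml -!mulr_sumr -!mulrA
  sum_indicator_mull sum_indicator mul1r -/(dev_above T m).
rewrite !big_split /= !sum_indicator_mull -mulr_suml -/(dev_below T m) dev_below_eq_above.
have [D0|D_neq0] := eqVneq (dev_above T m) 0.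
  rewrite D0 invr0 !mulr0 !add0r; case: eqP => // /eqP.
  by move/(dev_above_eq0 D0) ->.
rewrite divff // mulr1 mulrCA divff // mulr1.
by case: ltgtP; rewrite ?addr0 ?add0r.
Qed.

Lemma pair_weight_sum1 : \sum_r1 \sum_r2 pair_weight T m r1 r2 = 1.
Proof.
transitivity (\sum_r1 \sum_r2 \sum_r pair_weight T m r1 r2 * pair_mix T r1 r2 r).
  apply: eq_bigr => r1 _; apply: eq_bigr => r2 _.
  by rewrite -mulr_sumr pair_mix_sum1 mulr1.
under eq_bigr do rewrite exchange_big /=.
rewrite exchange_big /= -m_sum1; apply: eq_bigr => r _.
exact: pair_weight_mix_recombine.
Qed.

End Balanced.

End PairSplitting.

Lemma card_gt0_le2 (R : numDomainType) n (x : 'I_n -> R) (r1 r2 : 'I_n) :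
  (forall r, r != r1 -> r != r2 -> x r = 0) -> (#|[pred r | (0 < x r)%R]| <= 2)%N.
Proof.
move=> x_eq0; apply: leq_trans (card_size [:: r1; r2]).
apply: subset_leq_card; apply/fintype.subsetP => r; rewrite !inE.
by case: eqP => // /eqP ne1; case: eqP => // /eqP ne2; rewrite x_eq0 ?ltxx.
Qed.

Section PointFallback.
Variables (R : numDomainType) (n : nat) (r0 : 'I_n).
Implicit Types (w : 'I_n -> 'I_n -> R).

(* The weights of the construction sum to 1 only for drivers whose split has
   mean T i, i.e. almost everywhere; elsewhere we use the point mass at (r0, r0). *)
Definition weights_or_point w r1 r2 :=
  if \sum_a \sum_b w a b == 1 then w r1 r2 else (r1 == r0)%:R * (r2 == r0)%:R.

Lemma weights_or_point_id w r1 r2 :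
  \sum_a \sum_b w a b = 1 -> weights_or_point w r1 r2 = w r1 r2.
Proof. by rewrite /weights_or_point => ->; rewrite eqxx. Qed.

Lemma weights_or_point_sum1 w : \sum_r1 \sum_r2 weights_or_point w r1 r2 = 1.
Proof.
rewrite /weights_or_point; case: eqVneq => [w1|_] //=.
under eq_bigr do rewrite -mulr_sumr sum_indicator mulr1.
exact: sum_indicator.
Qed.

Lemma weights_or_point_bound w r1 r2 :
  (forall a b, 0 <= w a b) -> 0 <= weights_or_point w r1 r2 <= 1.
Proof.
move=> w_ge0; rewrite /weights_or_point; case: eqP => [w1|_].
  rewrite w_ge0 -w1 (le_trans (ler_term_sum r2 (w_ge0 r1))) //.
  by apply: ler_term_sum r1 _ => a; exact: sumr_ge0.
by case: (r1 == r0); case: (r2 == r0); rewrite ?mul1r ?mul0r ?ler01 ?lexx.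
Qed.

End PointFallback.

Lemma measurable_inv (R : realType) : measurable_fun [set: R] (GRing.inv : R -> R).
Proof.
have -> : (GRing.inv : R -> R) = (fun x => if x == 0 then 0 else x^-1).
  by apply/funext => x; case: eqP => // ->; rewrite invr0.
apply: measurable_fun_if => //; first exact: measurable_fun_eqr.
have -> : [set: R] `&` (fun x : R => x == 0) @^-1` [set false] = ~` [set 0].
  by apply/seteqP; split => x /=; [case=> _ /negbT/eqP | move=> /eqP/negbTE].
apply: open_continuous_measurable_fun.
  exact/closed_openC/accessible_closed_set1/hausdorff_accessible/Rhausdorff.
by move=> x; rewrite inE /= => /eqP x_neq0; exact: inv_continuous.
Qed.

Section Measurability.
Context d (I : measurableType d) (R : realType) (n : nat) (t : 'I_n -> R).
Variables (T : I -> R) (mu : I -> 'I_n -> R).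
Hypotheses (mT : measurable_fun setT T) (mmu : forall r, measurable_fun setT (mu^~ r)).

Lemma measurable_straddles r1 r2 :
  measurable_fun setT (fun i => straddles t (T i) r1 r2).
Proof. by apply: measurable_and; apply: measurable_fun_ltr. Qed.

Lemma measurable_dev_above : measurable_fun setT (fun i => dev_above t (T i) (mu i)).
Proof.
apply: measurable_sum => r; apply: measurable_fun_ifT.
- exact: measurable_fun_ltr.
- by apply: measurable_funM => //; apply: measurable_funB.
- exact: measurable_cst.
Qed.

Lemma measurable_pair_weight r1 r2 :
  measurable_fun setT (fun i => pair_weight t (T i) (mu i) r1 r2).
Proof.
apply: measurable_fun_ifT; first exact: measurable_straddles.
  apply: measurable_funM.
    by do 2 apply: measurable_funM => //.
  exact: measurableT_comp (@measurable_inv R) measurable_dev_above.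
apply: measurable_fun_ifT => //.
by apply: measurable_and => //; apply: measurable_fun_eqr.
Qed.

Lemma measurable_pair_mix r1 r2 r :
  measurable_fun setT (fun i => pair_mix t (T i) r1 r2 r).
Proof.
apply: measurable_fun_ifT => //; first exact: measurable_straddles.
by apply: measurable_funD; apply: measurable_funM => //;
  apply: measurable_funM => //; apply: measurable_funB.
Qed.

Lemma measurable_weights_or_point (r0 : 'I_n) (w : I -> 'I_n -> 'I_n -> R) r1 r2 :
  (forall a b, measurable_fun setT (fun i => w i a b)) ->
  measurable_fun setT (fun i => weights_or_point r0 (w i) r1 r2).
Proof.
move=> mw; apply: measurable_fun_ifT => //.
apply: measurable_fun_eqr => //.
by apply: measurable_sum => a; apply: measurable_sum => b.
Qed.

End Measurability.

Theorem proposition7 (d : measure_display) (I : measurableType d)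
  (R : realType) (P : {measure set I -> \bar R}) (nR : nat)
  (q t : 'I_nR -> R) (T : I -> R) (mu : I -> 'I_nR -> R) :
  (0 < nR)%N ->
  (forall r, 0 <= q r) ->
  P setT = (total_flow q)%:E ->
  offer_profile P q t T ->
  assignment_plan P q t T mu ->
  exists (alpha : I -> 'I_nR -> 'I_nR -> R)
         (muR : I -> 'I_nR -> 'I_nR -> 'I_nR -> R),
    [/\ (forall r1 r2, measurable_fun setT (fun i => alpha i r1 r2)),
        (forall i r1 r2, 0 <= alpha i r1 r2 <= 1),
        (forall i, \sum_(r1 < nR) \sum_(r2 < nR) alpha i r1 r2 = 1) &
        (forall r1 r2 r, measurable_fun setT (fun i => muR i r1 r2 r))] /\
    [/\ (forall i r1 r2, in_simplex (muR i r1 r2)),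
        (forall i r1 r2, at_most_two_positive (muR i r1 r2)) &
        {ae P, forall i,
          (forall r1 r2, 0 < alpha i r1 r2 ->
             \sum_(r < nR) t r * muR i r1 r2 r = T i) /\
          (forall r, \sum_(r1 < nR) \sum_(r2 < nR) alpha i r1 r2 * muR i r1 r2 r
                     = mu i r)}].
Proof.
move=> n_gt0 _ _ [mT _ _] [mmu mu01 _ mu_sum1 mu_mean].
have mu_ge0 i r : 0 <= mu i r by case/andP: (mu01 i r).
pose r0 := Ordinal n_gt0.
exists (fun i => weights_or_point r0 (pair_weight t (T i) (mu i))).
exists (fun i => pair_mix t (T i)).
split; split.
- move=> r1 r2; apply: measurable_weights_or_point => a b.
  exact: measurable_pair_weight.
- by move=> i r1 r2; apply: weights_or_point_bound => a b; exact: pair_weight_ge0.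
- by move=> i; exact: weights_or_point_sum1.
- by move=> r1 r2 r; exact: measurable_pair_mix.
- by move=> i r1 r2; split; [exact: pair_mix_ge0 | exact: pair_mix_sum1].
- by move=> i r1 r2; apply: card_gt0_le2 => r; exact: pair_mix_eq0.
- apply: filterS2 mu_sum1 mu_mean => i sum1 mean.
  have w_sum1 := pair_weight_sum1 (mu_ge0 i) sum1 mean.
  split=> [r1 r2|r].
  + by rewrite weights_or_point_id //; exact: pair_weight_gt0_mean.
  + under eq_bigr do under eq_bigr do rewrite weights_or_point_id //.
    exact: pair_weight_mix_recombine.
Qed.
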